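(* Let $R$ be a commutative ring with $1\neq 0$, $S\subseteq R$ a multiplicatively closed subset, and $M$ a finitely generated faithful multiplication $R$-module. Then $\mathrm{rad}^{S}(M)=\mathrm{rad}^{S}(R)\,M$, where $\mathrm{rad}^{S}(M)$ denotes the intersection of all $S$-prime submodules of $M$ and $\mathrm{rad}^{S}(R)$ the intersection of all $S$-prime ideals of $R$.
   Context: All rings are commutative with $1\neq 0$ and all modules are unital. A multiplicatively closed subset (m.c.s.) $S$ of $R$ is a subset with $0\notin S$, $1\in S$, and $ss'\in S$ for all $s,s'\in S$. $M$ is a multiplication module if every submodule of $M$ equals $JM$ for some ideal $J$; faithful means $\mathrm{Ann}_R(M)=0$. $(L:_R M)=\{r\in R: rM\subseteq L\}$. A submodule $P$ of $M$ with $(P:_R M)\cap S=\emptyset$ is $S$-prime if there exists $s\in S$ such that whenever $am\in P$ ($a\in R$, $m\in M$), then $sa\in(P:_R M)$ or $sm\in P$; $S$-prime ideals are $S$-prime submodules of the $R$-module $R$. An empty intersection of submodules of $M$ is taken to be $M$. *)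

From HB Require Import structures.
From mathcomp Require Import all_boot all_order all_algebra.
Unset Implicit Arguments. Unset Printing Implicit Defensive.
Import GRing.Theory.
Local Open Scope ring_scope.

Definition submodule (R : comNzRingType) (M : lmodType R) (N : M -> Prop) : Prop :=
  [/\ N 0, (forall x y, N x -> N y -> N (x + y)) & (forall (a : R) x, N x -> N (a *: x))].

Definition ideal (R : comNzRingType) (J : R -> Prop) : Prop := @submodule R R^o J.

Definition ideal_mul (R : comNzRingType) (M : lmodType R) (J : R -> Prop) : M -> Prop :=
  fun x => exists (n : nat) (a : 'I_n -> R) (m : 'I_n -> M),
    (forall i, J (a i)) /\ x = \sum_(i < n) a i *: m i.

Definition set_eq (T : Type) (A B : T -> Prop) : Prop := forall x, A x <-> B x.

Definition multiplication_module (R : comNzRingType) (M : lmodType R) : Prop :=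
  forall N : M -> Prop, submodule R M N ->
    exists J : R -> Prop, ideal R J /\ set_eq M N (ideal_mul R M J).

Definition faithful (R : comNzRingType) (M : lmodType R) : Prop :=
  forall r : R, (forall m : M, r *: m = 0) -> r = 0.

Definition finitely_generated (R : comNzRingType) (M : lmodType R) : Prop :=
  exists (n : nat) (g : 'I_n -> M), forall x : M,
    exists a : 'I_n -> R, x = \sum_(i < n) a i *: g i.

Definition mcs (R : comNzRingType) (S : R -> Prop) : Prop :=
  [/\ ~ S 0, S 1 & forall s t, S s -> S t -> S (s * t)].

Definition colon (R : comNzRingType) (M : lmodType R) (L : M -> Prop) : R -> Prop :=
  fun r => forall m : M, L (r *: m).

Definition S_prime_submodule (R : comNzRingType) (M : lmodType R)
    (S : R -> Prop) (P : M -> Prop) : Prop :=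
  [/\ submodule R M P,
      (forall r, colon R M P r -> ~ S r) &
      exists s, S s /\ forall (a : R) (m : M), P (a *: m) ->
        colon R M P (s * a) \/ P (s *: m)].

Definition S_prime_ideal (R : comNzRingType) (S : R -> Prop) (P : R -> Prop) : Prop :=
  @S_prime_submodule R R^o S P.

(* rad^S(M): intersection of all S-prime submodules (empty intersection = M) *)
Definition radS (R : comNzRingType) (M : lmodType R) (S : R -> Prop) : M -> Prop :=
  fun x => forall P : M -> Prop, S_prime_submodule R M S P -> P x.

Definition radS_ring (R : comNzRingType) (S : R -> Prop) : R -> Prop :=
  fun x => forall P : R -> Prop, S_prime_ideal R S P -> P x.

From mathcomp Require Import all_boot all_order all_algebra.
From Stdlib Require Import Classical ClassicalEpsilon.
From mathcomp Require Import ring.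
Set Implicit Arguments.
Unset Strict Implicit.
Import GRing.Theory.
Local Open Scope ring_scope.

(* The key property of such modules is *cancellation*: if a M ⊆ J M for an
   ideal J then a ∈ J.  First, with g_1..g_n
   generators of M, the ideal θ = Σ_j (R g_j : M) contains 1: since
   g_i ∈ (R g_i : M) M, one has g = T g with rows of T in (R g_i : M), so
   det(1 - T) kills M, hence vanishes by faithfulness, while
   det(1 - T) ≡ det 1 = 1 modulo θ.  Second, writing 1 = Σ c_j with
   c_j ∈ (R g_j : M), the hypothesis a M ⊆ J M and faithfulness give
   c_j² a ∈ J; a radical argument on Σ c_j = 1 then yields a ∈ J.

   With cancellation, P ↦ (P : M) sends S-prime submodules to S-prime ideals
   and p ↦ p M sends S-prime ideals to S-prime submodules; together with
   N ⊆ (N : M) M for submodules of a multiplication module, this gives both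
   inclusions of the theorem. *)

Definition cyclic (R : comNzRingType) (M : lmodType R) (m : M) : M -> Prop :=
  fun y => exists x : R, y = x *: m.

Definition cancellative (R : comNzRingType) (M : lmodType R) : Prop :=
  forall (J : R -> Prop) (a : R),
    ideal R J -> (forall m : M, ideal_mul R M J (a *: m)) -> J a.
Arguments cancellative : clear implicits.

Section SubmoduleFacts.
Variables (R : comNzRingType) (M : lmodType R).

Lemma submodule_sum (P : M -> Prop) n (F : 'I_n -> M) :
  submodule R M P -> (forall i, P (F i)) -> P (\sum_(i < n) F i).
Proof. by case=> P0 PD _ PF; apply: (big_ind P) => // i _; apply: PF. Qed.

Lemma cyclic_submodule (m : M) : submodule R M (cyclic m).
Proof.
split; first by exists 0; rewrite scale0r.
- by move=> x y [a ->] [b ->]; exists (a + b); rewrite scalerDl.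
- by move=> a x [b ->]; exists (a * b); rewrite scalerA.
Qed.

Lemma colon_ideal (N : M -> Prop) : submodule R M N -> ideal R (colon R M N).
Proof.
case=> N0 ND NZ; split.
- by move=> m; rewrite scale0r.
- by move=> x y hx hy m; rewrite scalerDl; apply: ND.
- by move=> a x hx m; rewrite /= -scalerA; apply: NZ.
Qed.

Lemma ideal_mul_single (J : R -> Prop) r (m : M) : J r -> ideal_mul R M J (r *: m).
Proof. by move=> Jr; exists 1%N, (fun _ => r), (fun _ => m); rewrite big_ord1. Qed.

Lemma ideal_mul_submodule (J : R -> Prop) : ideal R J -> submodule R M (ideal_mul R M J).
Proof.
case=> J0 JD JZ; split.
- by exists 0%N, (fun _ => 0), (fun _ => 0); rewrite big_ord0.
- move=> x y [n1 [a1 [m1 [h1 ->]]]] [n2 [a2 [m2 [h2 ->]]]].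
  exists (n1 + n2)%N, (fun i => match split i with inl j => a1 j | inr j => a2 j end),
    (fun i => match split i with inl j => m1 j | inr j => m2 j end); split.
  + by move=> i; case: (split i).
  + rewrite big_split_ord /=; congr (_ + _); apply: eq_bigr => i _.
    * by rewrite (unsplitK (inl i)).
    * by rewrite (unsplitK (inr i)).
- move=> r x [n [a [m [h ->]]]]; exists n, (fun i => r * a i), m; split.
  + by move=> i; apply: JZ.
  + by rewrite scaler_sumr; apply: eq_bigr => i _; rewrite scalerA.
Qed.

Lemma multiplication_colon (N : M -> Prop) x :
  multiplication_module R M -> submodule R M N -> N x -> ideal_mul R M (colon R M N) x.
Proof.
move=> hM hN Nx; have [J [_ NJ]] := hM N hN.
have [k [d [ms [Jd ->]]]] := proj1 (NJ x) Nx.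
exists k, d, ms; split=> // i m; apply/NJ; exact: ideal_mul_single.
Qed.

Lemma ideal_mul_generators n (g : 'I_n -> M) (J : R -> Prop) x :
  (forall y : M, exists a : 'I_n -> R, y = \sum_(j < n) a j *: g j) ->
  ideal R J -> ideal_mul R M J x ->
  exists t : 'I_n -> R, (forall j, J (t j)) /\ x = \sum_(j < n) t j *: g j.
Proof.
move=> hg [J0 JD JZ] [k [d [ms [Jd ->]]]].
have [b hb] := @ClassicalEpsilon.choice _ _
  (fun i (a : 'I_n -> R) => ms i = \sum_(j < n) a j *: g j) (fun i => hg (ms i)).
exists (fun j => \sum_(i < k) d i * b i j); split.
  by move=> j; apply: (big_ind J) => // i _; rewrite mulrC; apply: JZ.
under eq_bigr => i _ do rewrite hb scaler_sumr.
rewrite exchange_big /=; apply: eq_bigr => j _; rewrite scaler_suml.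
by apply: eq_bigr => i _; rewrite scalerA.
Qed.

End SubmoduleFacts.

Section IdealFacts.
Variable R : comNzRingType.

Lemma idealM (J : R -> Prop) r x : ideal R J -> J x -> J (r * x).
Proof. by case=> _ _ JZ; apply: JZ. Qed.

Definition ideal_sum n (J : 'I_n -> R -> Prop) : R -> Prop :=
  fun x => exists c : 'I_n -> R, (forall j, J j (c j)) /\ x = \sum_(j < n) c j.

Lemma ideal_sum_ideal n (J : 'I_n -> R -> Prop) :
  (forall j, ideal R (J j)) -> ideal R (ideal_sum J).
Proof.
move=> hJ; split.
- exists (fun _ => 0); rewrite big1 //; split=> // j; by case: (hJ j).
- move=> x y [c [hc ->]] [d [hd ->]]; exists (fun j => c j + d j).
  rewrite big_split; split=> // j; by case: (hJ j) => _ JD _; apply: JD.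
- move=> r x [c [hc ->]]; exists (fun j => r * c j).
  split=> [j|]; [exact: idealM | exact: mulr_sumr].
Qed.

Lemma ideal_sum_member n (J : 'I_n -> R -> Prop) i x :
  (forall j, ideal R (J j)) -> J i x -> ideal_sum J x.
Proof.
move=> hJ Jx; exists (fun j => if j == i then x else 0); split.
  by move=> j; case: eqP => [->|_] //; case: (hJ j).
by rewrite (bigD1 i) //= eqxx big1 ?addr0 // => j /negbTE ->.
Qed.

Lemma ideal_det_congr (I : R -> Prop) n (A B : 'M[R]_n) :
  ideal R I -> (forall i j, I (A i j - B i j)) -> I (\det A - \det B).
Proof.
move=> hI hAB; have [I0 ID _] := hI.
have sub_ind (op : R -> R -> R) (idx : R) (T : Type) (r : seq T) (P : pred T) (F G : T -> R) :
    (forall x1 x2 y1 y2, I (x1 - x2) -> I (y1 - y2) -> I (op x1 y1 - op x2 y2)) ->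
    (forall i, I (F i - G i)) ->
    I (\big[op/idx]_(i <- r | P i) F i - \big[op/idx]_(i <- r | P i) G i).
  move=> hop hFG; apply: (big_ind2 (fun x y => I (x - y))) => //.
  by rewrite subrr.
rewrite /determinant; apply: (sub_ind) => [x1 x2 y1 y2 h1 h2|s].
  have -> : x1 + y1 - (x2 + y2) = (x1 - x2) + (y1 - y2) by ring.
  exact: ID.
rewrite -mulrBr; apply: idealM => //; apply: (sub_ind) => // x1 x2 y1 y2 h1 h2.
have -> : x1 * y1 - x2 * y2 = x1 * (y1 - y2) + y2 * (x1 - x2) by ring.
by apply: ID; apply: idealM.
Qed.

Lemma ideal_pow_add (K : R -> Prop) x y p q :
  ideal R K -> K (x ^+ p) -> K (y ^+ q) -> K ((x + y) ^+ (p + q)).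
Proof.
move=> hK hx hy; have [K0 KD _] := hK; rewrite exprDn.
apply: (big_ind K) => // i _; rewrite -mulr_natl; apply: idealM => //.
case: (leqP q i) => hi.
  by rewrite -(subnK hi) exprD mulrA; apply: idealM.
have hp : (p <= p + q - i)%N by rewrite -addnBA ?leq_addr // ltnW.
rewrite -(subnK hp) exprD.
have -> : x ^+ (p + q - i - p) * x ^+ p * y ^+ i
        = (x ^+ (p + q - i - p) * y ^+ i) * x ^+ p by ring.
exact: idealM.
Qed.

Lemma ideal_pow_sum (K : R -> Prop) n (F : 'I_n -> R) :
  ideal R K -> (forall j, exists e, K (F j ^+ e)) ->
  exists e, K ((\sum_(j < n) F j) ^+ e).
Proof.
move=> hK hF; apply: (big_ind (fun x => exists e, K (x ^+ e))) => //.
- by exists 1%N; rewrite expr1; case: hK.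
- by move=> x y [p hp] [q hq]; exists (p + q)%N; apply: ideal_pow_add.
Qed.

End IdealFacts.

Section DeterminantTrick.
Variables (R : comNzRingType) (M : lmodType R) (n : nat) (g : 'I_n -> M).

(* Determinant trick: a relation g = T g gives det(1 - T) g_k = 0, since
   adj(A) A = det(A) 1 turns the relations A g = 0 into det(A) g = 0. *)
Lemma det_annihilates_generators (T : 'M[R]_n) :
  (forall i, g i = \sum_(j < n) T i j *: g j) -> forall k, \det (1%:M - T) *: g k = 0.
Proof.
move=> hT k; set A := 1%:M - T.
have rowA i : \sum_(j < n) A i j *: g j = 0.
  under eq_bigr => j _ do rewrite !mxE scalerBl.
  rewrite sumrB -hT (bigD1 i) //= eqxx scale1r big1 ?addr0 ?subrr //.
  by move=> j /negbTE; rewrite eq_sym => ->; rewrite scale0r.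
have <- : \sum_(j < n) (\adj A *m A) k j *: g j = \det A *: g k.
  rewrite mul_adj_mx (bigD1 k) //= mxE eqxx mulr1n big1 ?addr0 //.
  by move=> j /negbTE; rewrite mxE eq_sym => ->; rewrite mulr0n scale0r.
under eq_bigr => j _ do rewrite mxE scaler_suml.
rewrite exchange_big /= big1 // => i _.
under eq_bigr => j _ do rewrite -scalerA.
by rewrite -scaler_sumr rowA scaler0.
Qed.

End DeterminantTrick.

Section Cancellation.
Variables (R : comNzRingType) (M : lmodType R) (n : nat) (g : 'I_n -> M).
Hypothesis generators : forall x : M, exists a : 'I_n -> R, x = \sum_(i < n) a i *: g i.
Hypothesis hF : faithful R M.
Hypothesis hM : multiplication_module R M.

Let theta := ideal_sum (fun j => colon R M (cyclic (g j))).

Let theta_ideal : ideal R theta.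
Proof.
apply: ideal_sum_ideal => j; apply: colon_ideal; exact: cyclic_submodule.
Qed.

Lemma trace_ideal_one : theta 1.
Proof.
have rows i : exists t : 'I_n -> R,
    (forall j, colon R M (cyclic (g i)) (t j)) /\ g i = \sum_(j < n) t j *: g j.
  apply: ideal_mul_generators => //; first by apply/colon_ideal/cyclic_submodule.
  by apply: multiplication_colon => //; [apply: cyclic_submodule | exists 1; rewrite scale1r].
have [T hT] := @ClassicalEpsilon.choice _ _ _ rows.
have det0 : \det (1%:M - \matrix_(i, j) T i j) = 0.
  apply: hF => m; have [a ->] := generators m.
  rewrite scaler_sumr big1 // => i _; rewrite scalerA mulrC -scalerA.
  by rewrite det_annihilates_generators ?scaler0 // => k; rewrite (proj2 (hT k));
    apply: eq_bigr => j _; rewrite mxE.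
have := ideal_det_congr (A := 1%:M - \matrix_(i, j) T i j) (B := 1%:M) theta_ideal.
rewrite det0 det1 sub0r => h.
rewrite -[1]opprK -mulN1r; apply: idealM => //; apply: h => i j.
rewrite !mxE addrAC subrr add0r -mulN1r; apply: idealM => //.
exact: (ideal_sum_member (fun j => colon_ideal (cyclic_submodule (g j))) (proj1 (hT i) j)).
Qed.

Lemma colon_sq_mul (J : R -> Prop) (m : M) c a :
  ideal R J -> colon R M (cyclic m) c -> ideal_mul R M J (a *: m) -> J (c ^+ 2 * a).
Proof.
move=> hJ hc [k [b [ms [Jb Eam]]]].
have [r hr] := @ClassicalEpsilon.choice _ _ (fun i x => c *: ms i = x *: m) (fun i => hc (ms i)).
pose u := \sum_(i < k) b i * r i.
have Ju : J u.
  have [J0 JD _] := hJ.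
  by apply: (big_ind J) => // i _; rewrite mulrC; apply: idealM.
have Ecam : (c * a) *: m = u *: m.
  rewrite -scalerA Eam scaler_sumr scaler_suml; apply: eq_bigr => i _.
  by rewrite scalerA (mulrC c) -!scalerA hr.
have kill : c * (c * a - u) = 0.
  apply: hF => m'; have [x hx] := hc m'.
  by rewrite mulrC -scalerA hx scalerA mulrC -scalerA scalerBl Ecam subrr scaler0.
have -> : c ^+ 2 * a = c * u by apply/eqP; rewrite -subr_eq0 -kill; apply/eqP; ring.
exact: idealM.
Qed.

Lemma fg_faithful_multiplication_cancellative : cancellative R M.
Proof.
move=> J a hJ haM; have [c [hc sum1]] := trace_ideal_one.
pose K r := J (r * a).
have hK : ideal R K.
  have [J0 JD _] := hJ; split; rewrite /K.
  - by rewrite mul0r.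
  - by move=> u v hu hv; rewrite mulrDl; apply: JD.
  - by move=> r u hu; rewrite /= -mulrA; apply: idealM.
have [e] := ideal_pow_sum hK (fun j => ex_intro _ 2%N (colon_sq_mul hJ (hc j) (haM (g j)))).
by rewrite -sum1 expr1n /K mul1r.
Qed.

End Cancellation.

Section SPrime.
Variables (R : comNzRingType) (M : lmodType R) (S : R -> Prop).

Lemma ideal_mul_mono (J K : R -> Prop) (x : M) :
  (forall r, J r -> K r) -> ideal_mul R M J x -> ideal_mul R M K x.
Proof. by move=> JK [k [a [m [Ja ->]]]]; exists k, a, m; split=> // i; apply: JK. Qed.

Lemma colon_S_prime (P : M -> Prop) :
  S_prime_submodule R M S P -> S_prime_ideal R S (colon R M P).
Proof.
case=> hP PS [s [Ss hs]]; have [_ _ PZ] := hP; split.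
- exact: colon_ideal.
- by move=> r hr; apply: PS => m; have := hr 1 m; rewrite /= [_ *: 1]mulr1.
- exists s; split=> // a b hab.
  case: (classic (colon R M P (s * a))) => h.
    left=> r m; have -> : (s * a) *: (r : R^o) = r * (s * a) by exact: mulrC.
    by rewrite -scalerA; apply: PZ; apply: h.
  right=> m; case: (hs a (b *: m)); last by rewrite scalerA.
  + by rewrite scalerA; apply: hab.
  + by move=> h'; case: h.
Qed.

Lemma radS_submodule : submodule R M (radS R M S).
Proof.
split.
- by move=> P [[P0 _ _] _ _].
- by move=> u v hu hv P hP; have [[_ PD _] _ _] := hP; apply: PD; [apply: hu | apply: hv].
- by move=> r u hu P hP; have [[_ _ PZ] _ _] := hP; apply: PZ; apply: hu.
Qed.

(* rad^S(R) M ⊆ rad^S(M), since rad^S(R) ⊆ (P : M) for every S-prime P. *)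
Lemma radS_ring_mul_sub (x : M) : ideal_mul R M (radS_ring R S) x -> radS R M S x.
Proof.
move=> [k [a [m [ha ->]]]] P hP; apply: submodule_sum => [|i]; first by case: hP.
exact: (ha i _ (colon_S_prime hP)).
Qed.

Hypothesis hM : multiplication_module R M.
Hypothesis hcanc : cancellative R M.

(* p M is an S-prime submodule whenever p is an S-prime ideal: if a m ∈ p M,
   write m = Σ d_i m_i with d_i ∈ (R m : M); then a d_i M ⊆ p M, so a d_i ∈ p
   by cancellation, and S-primality of p is applied to each a d_i. *)
Lemma ideal_mul_S_prime (p : R -> Prop) :
  S_prime_ideal R S p -> S_prime_submodule R M S (ideal_mul R M p).
Proof.
case=> hp pS [s [Ss hs]]; have hpM := ideal_mul_submodule M hp.
split=> //.
- move=> r hr; apply: pS => m; have -> : r *: (m : R^o) = m * r by exact: mulrC.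
  by apply: idealM => //; apply: hcanc.
- exists s; split=> // a m ham.
  case: (classic (colon R M (ideal_mul R M p) (s * a))) => h; first by left.
  right; have [k [d [ms [hd ->]]]] := multiplication_colon hM (cyclic_submodule m)
    (ex_intro _ 1 (esym (scale1r m))).
  exists k, (fun i => s * d i), ms; split; last first.
    by rewrite scaler_sumr; apply: eq_bigr => i _; rewrite scalerA.
  move=> i; have pad : p (a * d i).
    apply: hcanc => // m'; have [x hx] := hd i m'.
    by rewrite -scalerA hx scalerA mulrC -scalerA; case: hpM => _ _; apply.
  case: (hs a (d i) pad) => // hsa; case: h => m'; apply: ideal_mul_single.
  by have := hsa 1; rewrite /= [_ *: 1]mulr1.
Qed.

(* (rad^S(M) : M) ⊆ rad^S(R): r M ⊆ rad^S(M) ⊆ p M forces r ∈ p by cancellation. *)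
Lemma colon_radS_sub (r : R) : colon R M (radS R M S) r -> radS_ring R S r.
Proof.
move=> hr p hp; apply: hcanc => [|m]; first by case: hp.
exact: hr m _ (ideal_mul_S_prime hp).
Qed.

End SPrime.

Theorem theorem3p6 (R : comNzRingType) (S : R -> Prop) (M : lmodType R) :
  mcs R S -> finitely_generated R M -> faithful R M -> multiplication_module R M ->
  set_eq M (radS R M S) (ideal_mul R M (radS_ring R S)).
Proof.
move=> _ [n [g generators]] hF hM.
have hcanc := fg_faithful_multiplication_cancellative generators hF hM.
move=> x; split; last exact: radS_ring_mul_sub.
move=> hx; apply: ideal_mul_mono (colon_radS_sub hM hcanc) _.
exact: multiplication_colon hM (radS_submodule M S) hx.
Qed.
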